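(* Let a product two-action game with $m$ players be given, and let $\pi\in\mathrm{Der}_m$. Then the set $EC(\pi)$ consists of exactly one point, namely $\underline\gamma$ with $\gamma^j=a^{\pi(j)}_j$ for all $j\in\mathcal A$, and this point is a Nash equilibrium (with all $\gamma^j\in(0,1)$). In particular the game has at least $!m$ Nash equilibria in the open cube $(0,1)^m$.
   Context: Fix an integer $m\ge 1$ and $\mathcal A=\{1,\dots,m\}$. A two-action game is a finite game in normal form with player set $\mathcal A$ in which each player $i$ has exactly two pure strategies $s^i_0,s^i_1$, together with utility functions $U^i:S\to\mathbb R$, where $S=\prod_{i\in\mathcal A}\{s^i_0,s^i_1\}$. A mixed strategy combination is identified with $\underline\gamma=(\gamma^1,\dots,\gamma^m)\in[0,1]^m$, where $\gamma^i$ is the probability with which player $i$ plays $s^i_1$. The expected utility $V^i$ is the multilinear extension $V^i(\underline\gamma)=\sum_{(j_1,\dots,j_m)\in\{0,1\}^m}\prod_{k=1}^m p_k(j_k)\,U^i(s^1_{j_1},\dots,s^m_{j_m})$ with $p_k(1)=\gamma^k$, $p_k(0)=1-\gamma^k$. Write $\underline\gamma^{-i}=(\gamma^j)_{j\ne i}$ and $\lambda^i(\underline\gamma^{-i}):=V^i(\underline\gamma)|_{\gamma^i=1}-V^i(\underline\gamma)|_{\gamma^i=0}$. A Nash equilibrium is a point $\underline\gamma\in[0,1]^m$ such that for every $i$: $\lambda^i(\underline\gamma^{-i})=0$ if $0<\gamma^i<1$; $\lambda^i(\underline\gamma^{-i})\le 0$ if $\gamma^i=0$; $\lambda^i(\underline\gamma^{-i})\ge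 0$ if $\gamma^i=1$. For $\underline\gamma$ put $L_0(\underline\gamma)=\{i:\gamma^i=0\}$, $L_1(\underline\gamma)=\{i:\gamma^i=1\}$, $L(\underline\gamma)=L_0(\underline\gamma)\cup L_1(\underline\gamma)$. A two-action game is a product two-action game if there exist $\underline v=(v_1,\dots,v_m)\in\{0,1\}^m$ and numbers $a^i_j\in(0,1)$ for $i,j\in\mathcal A$, $i\ne j$, with $a^{i_1}_j\neq a^{i_2}_j$ whenever $i_1\neq i_2$ and both differ from $j$, such that $\lambda^i(\underline\gamma^{-i})=(-1)^{v_i}\prod_{j\in\mathcal A\setminus\{i\}}(\gamma^j-a^i_j)$ for every $i\in\mathcal A$. For $\pi\in S_m$, $F(\pi)=\{i\in\mathcal A:\pi(i)=i\}$; $\mathrm{Der}_m$ is the set of $\pi\in S_m$ with $F(\pi)=\emptyset$; $!m=|\mathrm{Der}_m|$. $EC(\pi):=\{\underline\gamma\in[0,1]^m \mid L(\underline\gamma)=F(\pi),\ \gamma^j=a^{\pi(j)}_j \text{ for all } j\notin F(\pi)\}$. *)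

(* Players are 'I_m; a pure profile is s : {ffun 'I_m -> bool}
   (s i = true means player i plays s^i_1); a mixed profile is
   g : {ffun 'I_m -> R}, g i = probability that player i plays s^i_1. *)
From mathcomp Require Import all_boot all_order all_algebra all_fingroup.
Set Implicit Arguments. Unset Strict Implicit. Unset Printing Implicit Defensive.
Import Order.TTheory GRing.Theory Num.Theory.
Local Open Scope ring_scope.

Section Game.
Variables (R : realFieldType) (m : nat).

Definition utilities := 'I_m -> {ffun 'I_m -> bool} -> R.

Definition expV (U : utilities) (i : 'I_m) (g : {ffun 'I_m -> R}) : R :=
  \sum_(s : {ffun 'I_m -> bool})
     (\prod_(k < m) (if s k then g k else 1 - g k)) * U i s.

Definition setc (g : {ffun 'I_m -> R}) (i : 'I_m) (x : R) : {ffun 'I_m -> R} :=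
  [ffun k => if k == i then x else g k].

Definition lambda (U : utilities) (i : 'I_m) (g : {ffun 'I_m -> R}) : R :=
  expV U i (setc g i 1) - expV U i (setc g i 0).

Definition in_cube (g : {ffun 'I_m -> R}) : Prop := forall j, 0 <= g j <= 1.
Definition in_open_cube (g : {ffun 'I_m -> R}) : Prop := forall j, 0 < g j < 1.

Definition Nash (U : utilities) (g : {ffun 'I_m -> R}) : Prop :=
  in_cube g /\
  forall i, [/\ (0 < g i < 1 -> lambda U i g = 0),
                (g i = 0 -> lambda U i g <= 0) &
                (g i = 1 -> 0 <= lambda U i g)].

(* product two-action game with data v, a (a i j = a^i_j) *)
Definition product_game (U : utilities) (v : 'I_m -> bool) (a : 'I_m -> 'I_m -> R)
  : Prop :=
  [/\ (forall i j, i != j -> 0 < a i j < 1),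
      (forall i1 i2 j, i1 != i2 -> i1 != j -> i2 != j -> a i1 j != a i2 j) &
      (forall i g, in_cube g ->
         lambda U i g = (-1) ^+ v i * \prod_(j < m | j != i) (g j - a i j))].

Definition derangementb (p : {perm 'I_m}) : bool := [forall i, p i != i].
Definition subfactorial : nat := #|[set p : {perm 'I_m} | derangementb p]|.

Definition Lset (g : {ffun 'I_m -> R}) (j : 'I_m) : Prop := g j = 0 \/ g j = 1.

Definition EC (a : 'I_m -> 'I_m -> R) (p : {perm 'I_m}) (g : {ffun 'I_m -> R})
  : Prop :=
  [/\ in_cube g,
      (forall j, Lset g j <-> p j = j) &
      (forall j, p j != j -> g j = a (p j) j)].

End Game.

From mathcomp Require Import all_boot all_order all_algebra all_fingroup.
Set Implicit Arguments. Unset Strict Implicit. Unset Printing Implicit Defensive.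
Import Order.TTheory GRing.Theory Num.Theory.
Local Open Scope ring_scope.

(* For a derangement pi, the point gamma^j = a^{pi j}_j lies in the open cube
   because every a^i_j with i <> j does.  Each player i equals pi k for
   k = pi^-1 i <> i, so the factor gamma^k - a^i_k of lambda^i vanishes: every
   player is indifferent, which makes the point a totally mixed equilibrium.
   Distinct derangements differ at some j, and the column condition
   a^{i1}_j <> a^{i2}_j separates the corresponding points, giving !m of them. *)

Section OpenCube.
Variables (R : realFieldType) (m : nat).

Lemma open_cube_in_cube (g : {ffun 'I_m -> R}) : in_open_cube g -> in_cube g.
Proof. by move=> og j; have /andP[g0 g1] := og j; rewrite !ltW. Qed.

Lemma open_cube_notL (g : {ffun 'I_m -> R}) j : in_open_cube g -> ~ Lset g j.
Proof. by move=> og [] gj; have := og j; rewrite gj ltxx ?andbF. Qed.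

Lemma Nash_indifferent (U : utilities R m) (g : {ffun 'I_m -> R}) :
  in_cube g -> (forall i, lambda U i g = 0) -> Nash U g.
Proof. by move=> cg l0; split=> // i; rewrite l0 lexx. Qed.

End OpenCube.

Section DerangementPoint.
Variables (R : realFieldType) (m : nat) (a : 'I_m -> 'I_m -> R).

Definition derangement_point (p : {perm 'I_m}) : {ffun 'I_m -> R} :=
  [ffun j => a (p j) j].

Hypothesis a_open : forall i j, i != j -> 0 < a i j < 1.

Lemma derangement_point_open (p : {perm 'I_m}) :
  derangementb p -> in_open_cube (derangement_point p).
Proof. by move=> /forallP dp j; rewrite ffunE a_open. Qed.

Lemma EC_derangement_point (p : {perm 'I_m}) :
  derangementb p -> EC a p (derangement_point p).
Proof.
move=> dp; have og := derangement_point_open dp.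
split; first exact: open_cube_in_cube.
- move=> j; split=> [/(open_cube_notL og) // | pj].
  by have /forallP/(_ j) := dp; rewrite pj eqxx.
- by move=> j _; rewrite ffunE.
Qed.

Lemma EC_derangement_uniq (p : {perm 'I_m}) (h : {ffun 'I_m -> R}) :
  derangementb p -> EC a p h -> h = derangement_point p.
Proof.
by move=> /forallP dp [_ _ hp]; apply/ffunP=> j; rewrite ffunE hp.
Qed.

Lemma derangement_point_inj :
  (forall i1 i2 j, i1 != i2 -> i1 != j -> i2 != j -> a i1 j != a i2 j) ->
  {in [pred p | derangementb p] &, injective derangement_point}.
Proof.
move=> a_sep p q /forallP dp /forallP dq epq; apply/permP=> j.
apply/eqP; apply/negPn/negP=> npq.
have /ffunP/(_ j) := epq; rewrite !ffunE; apply/eqP.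
by rewrite a_sep // ?dp ?dq.
Qed.

Lemma lambda_derangement_point (U : utilities R m) (v : 'I_m -> bool)
    (p : {perm 'I_m}) i :
  product_game U v a -> derangementb p ->
  lambda U i (derangement_point p) = 0.
Proof.
case=> _ _ hl dp; rewrite hl; last first.
  exact/open_cube_in_cube/derangement_point_open.
have pk : p ((p^-1)%g i) = i by rewrite permKV.
have ki : (p^-1)%g i != i by rewrite -{2}pk eq_sym (forallP dp).
by rewrite (bigD1 ((p^-1)%g i) ki) /= ffunE pk subrr mul0r mulr0.
Qed.

End DerangementPoint.

Theorem theorem3p7 (R : realFieldType) (m : nat) (hm : (0 < m)%N)
  (U : utilities R m) (v : 'I_m -> bool) (a : 'I_m -> 'I_m -> R) :
  product_game U v a ->
  (forall p : {perm 'I_m}, derangementb p ->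
     let g := [ffun j => a (p j) j] in
     [/\ EC a p g,
         (forall h, EC a p h -> h = g),
         Nash U g &
         in_open_cube g]) /\
  (exists s : seq {ffun 'I_m -> R},
     [/\ uniq s, (subfactorial m <= size s)%N &
         forall g, g \in s -> Nash U g /\ in_open_cube g]).
Proof.
move=> pg; have [a_open a_sep _] := pg.
have eq_point p : derangementb p -> [/\ EC a p (derangement_point a p),
    (forall h, EC a p h -> h = derangement_point a p),
    Nash U (derangement_point a p) & in_open_cube (derangement_point a p)].
  move=> dp; have og := derangement_point_open a_open dp.
  split; [exact: EC_derangement_point | by move=> h; apply: EC_derangement_uniq | | by []].
  apply: Nash_indifferent; first exact: open_cube_in_cube.
  by move=> i; apply: lambda_derangement_point pg dp.
split; first exact: eq_point.
exists (map (derangement_point a) (enum [set p | derangementb p])).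
split.
- rewrite map_inj_in_uniq ?enum_uniq // => p q.
  by rewrite !mem_enum !inE; apply: derangement_point_inj.
- by rewrite size_map -cardE.
- by move=> g /mapP[p]; rewrite mem_enum inE => /eq_point[_ _ Ng og] ->.
Qed.
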